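(* Let $p$ be a non-constant polynomial with integer coefficients such that there is no integer $a$ with $|a|\ge2$ and $p(\mathbb Z)\subseteq a\mathbb Z$. Then $Q=\{p(k);\,k\ge0\}$ is a Kazhdan set in $\mathbb Z$.
   Context: A subset $Q$ is a Kazhdan set in $\mathbb Z$ if there exists $\varepsilon>0$ such that every unitary representation $\pi$ of $\mathbb Z$ having a vector $x$ with $\sup_{n\in Q}\|\pi(n)x-x\|<\varepsilon\|x\|$ has a non-zero $\mathbb Z$-invariant vector. *)

From Stdlib Require Import Reals ZArith List.
Open Scope R_scope.

(* A complex Hilbert space, presented as a real Hilbert space (real inner
   product = real part of the complex inner product) together with a complex
   structure J (multiplication by i): J is real-linear, J (J x) = - x, and J
   preserves the real inner product. *)
Record CHilbert := {
  hcar :> Type;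
  hzero : hcar;
  hadd : hcar -> hcar -> hcar;
  hopp : hcar -> hcar;
  hscal : R -> hcar -> hcar;
  hinner : hcar -> hcar -> R;
  hJ : hcar -> hcar;
  hadd_assoc : forall x y z, hadd x (hadd y z) = hadd (hadd x y) z;
  hadd_comm : forall x y, hadd x y = hadd y x;
  hadd_0l : forall x, hadd hzero x = x;
  hadd_oppl : forall x, hadd (hopp x) x = hzero;
  hscal_assoc : forall a b x, hscal a (hscal b x) = hscal (a * b) x;
  hscal_1 : forall x, hscal 1 x = x;
  hscal_addr : forall a x y, hscal a (hadd x y) = hadd (hscal a x) (hscal a y);
  hscal_addl : forall a b x, hscal (a + b) x = hadd (hscal a x) (hscal b x);
  hinner_sym : forall x y, hinner x y = hinner y x;
  hinner_addl : forall x y z, hinner (hadd x y) z = hinner x z + hinner y z;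
  hinner_scall : forall a x y, hinner (hscal a x) y = a * hinner x y;
  hinner_pos : forall x, 0 <= hinner x x;
  hinner_def : forall x, hinner x x = 0 -> x = hzero;
  hJ_add : forall x y, hJ (hadd x y) = hadd (hJ x) (hJ y);
  hJ_scal : forall a x, hJ (hscal a x) = hscal a (hJ x);
  hJJ : forall x, hJ (hJ x) = hopp x;
  hJ_inner : forall x y, hinner (hJ x) (hJ y) = hinner x y;
  hcomplete : forall u : nat -> hcar,
    (forall eps, 0 < eps -> exists N : nat, forall m n, (N <= m)%nat -> (N <= n)%nat ->
        sqrt (hinner (hadd (u m) (hopp (u n))) (hadd (u m) (hopp (u n)))) < eps) ->
    exists l, forall eps, 0 < eps -> exists N : nat, forall n, (N <= n)%nat ->
        sqrt (hinner (hadd (u n) (hopp l)) (hadd (u n) (hopp l))) < eps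
}.

Definition hnorm {H : CHilbert} (x : H) : R := sqrt (hinner H x x).
Definition hsub {H : CHilbert} (x y : H) : H := hadd H x (hopp H y).

(* A unitary representation of the (discrete) group Z on H: a group
   homomorphism n |-> pi n into complex-linear isometric (hence unitary,
   since pi n has inverse pi (-n)) operators. *)
Definition unitary_rep (H : CHilbert) (pi : Z -> H -> H) : Prop :=
  (forall x, pi 0%Z x = x) /\
  (forall m n x, pi (m + n)%Z x = pi m (pi n x)) /\
  (forall n x y, pi n (hadd H x y) = hadd H (pi n x) (pi n y)) /\
  (forall n a x, pi n (hscal H a x) = hscal H a (pi n x)) /\
  (forall n x, pi n (hJ H x) = hJ H (pi n x)) /\
  (forall n x y, hinner H (pi n x) (pi n y) = hinner H x y).

(* Kazhdan set in Z. "sup_{n in Q} ||pi(n)x - x|| < eps ||x||" is rendered as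
   existence of a bound c < eps ||x|| for all ||pi(n)x - x||, n in Q. *)
Definition Kazhdan_set (Q : Z -> Prop) : Prop :=
  exists eps, 0 < eps /\
    forall (H : CHilbert) (pi : Z -> H -> H), unitary_rep H pi ->
      (exists x : H, exists c, c < eps * hnorm x /\
          forall n, Q n -> hnorm (hsub (pi n x) x) <= c) ->
      exists v : H, v <> hzero H /\ forall n, pi n v = v.

(* Integer polynomials as coefficient lists c = [c_0; c_1; ...]. *)
Definition zpoly_eval (c : list Z) (x : Z) : Z :=
  fold_right (fun a acc => (a + x * acc)%Z) 0%Z c.

Definition zpoly_nonconstant (c : list Z) : Prop :=
  exists i, (1 <= i)%nat /\ nth i c 0%Z <> 0%Z.

From Stdlib Require Import Reals ZArith List Lra Lia Psatz Classical ClassicalEpsilon.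
Open Scope R_scope.

(* If every element of Z moves a vector x by at most r < ||x||, then the point of
   least norm in the closed convex hull of the orbit of x is invariant (the hull
   is, and its least-norm point is unique) and non-zero (the hull lies within r
   of x).  The set Q boundedly generates Z: some iterated finite difference of p
   is an arithmetic progression with non-zero step A, so every multiple of A is
   a signed sum of boundedly many values of p; and the subgroup generated by Q
   is Z, since its positive generator divides every p(k), k >= 0, hence, p being
   periodic modulo it, every p(k).  If every integer is a signed sum of at most
   K elements of Q, then a vector moved by less than ||x|| / (K + 1) by Q is
   moved by less than ||x|| by Z, so eps = 1 / (K + 1) works. *)

Section HilbertSpace.

Context {H : CHilbert}.
Implicit Types x y z w : H.

Lemma hscal_0l x : hscal H 0 x = hzero H.
Proof.
  assert (E : hscal H 0 x = hadd H (hscal H 0 x) (hscal H 0 x)).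
  { rewrite <- hscal_addl. f_equal. ring. }
  assert (E' : hadd H (hopp H (hscal H 0 x)) (hscal H 0 x) =
               hadd H (hopp H (hscal H 0 x)) (hadd H (hscal H 0 x) (hscal H 0 x)))
    by (rewrite <- E; reflexivity).
  rewrite hadd_assoc, hadd_oppl, hadd_0l in E'. congruence.
Qed.

Lemma hopp_scal x : hopp H x = hscal H (-1) x.
Proof.
  assert (E : hadd H (hscal H (-1) x) x = hzero H).
  { rewrite <- (hscal_1 H x) at 2. rewrite <- hscal_addl.
    replace (-1 + 1) with 0 by ring. apply hscal_0l. }
  assert (E' : hadd H (hadd H (hscal H (-1) x) x) (hopp H x) = hadd H (hzero H) (hopp H x))
    by (rewrite E; reflexivity).
  rewrite <- hadd_assoc, (hadd_comm H x), hadd_oppl, hadd_0l in E'.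
  rewrite (hadd_comm H (hscal H (-1) x)), hadd_0l in E'. congruence.
Qed.

Lemma hinner_0l w : hinner H (hzero H) w = 0.
Proof. rewrite <- (hscal_0l w), hinner_scall. ring. Qed.

Lemma hinner_0r w : hinner H w (hzero H) = 0.
Proof. rewrite hinner_sym. apply hinner_0l. Qed.

Lemma hinner_addr x y z : hinner H x (hadd H y z) = hinner H x y + hinner H x z.
Proof. rewrite !(hinner_sym H x). apply hinner_addl. Qed.

Lemma hinner_scalr a x y : hinner H x (hscal H a y) = a * hinner H x y.
Proof. rewrite !(hinner_sym H x). apply hinner_scall. Qed.

Lemma hvec_ext x y : (forall w, hinner H x w = hinner H y w) -> x = y.
Proof.
  intros E. assert (Z : hinner H (hsub x y) (hsub x y) = 0).
  { unfold hsub. rewrite hinner_addl, E, hopp_scal, hinner_scall. ring. }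
  apply hinner_def in Z. unfold hsub in Z.
  transitivity (hadd H x (hadd H (hopp H y) y)).
  - rewrite hadd_oppl, hadd_comm, hadd_0l. reflexivity.
  - rewrite hadd_assoc, Z, hadd_0l. reflexivity.
Qed.

End HilbertSpace.

(* Vector identities are checked against every test vector, where they become
   identities between real numbers. *)
Ltac hinner_expand := unfold hsub, hnorm in *; repeat rewrite hopp_scal in *;
  repeat rewrite ?hinner_addl, ?hinner_addr, ?hinner_scall, ?hinner_scalr,
                 ?hinner_0l, ?hinner_0r in *.

Ltac vector_eq := apply hvec_ext; intro; hinner_expand; field.

Section HilbertNorm.

Context {H : CHilbert}.
Implicit Types x y z : H.

Lemma hnorm_ge0 x : 0 <= hnorm x.
Proof. apply sqrt_pos. Qed.

Lemma hinner_cauchy_schwarz x y :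
  hinner H x y * hinner H x y <= hinner H x x * hinner H y y.
Proof.
  assert (P : forall t, 0 <= hinner H x x + 2 * t * hinner H x y + t * t * hinner H y y).
  { intro t. pose proof (hinner_pos H (hadd H x (hscal H t y))) as P. hinner_expand.
    rewrite (hinner_sym H y x) in P. lra. }
  pose proof (hinner_pos H x). pose proof (hinner_pos H y).
  set (a := hinner H x x) in *. set (b := hinner H x y) in *. set (c := hinner H y y) in *.
  destruct (Req_dec c 0) as [C0|C0].
  - destruct (Req_dec b 0) as [B0|B0]; [rewrite B0, C0; lra|].
    specialize (P (- (a + 1) / (2 * b))). rewrite C0 in P.
    replace (a + 2 * (- (a + 1) / (2 * b)) * b + - (a + 1) / (2 * b) * (- (a + 1) / (2 * b)) * 0)
      with (-1) in P by (field; auto). lra.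
  - specialize (P (- b / c)).
    assert (E : c * (a + 2 * (- b / c) * b + (- b / c) * (- b / c) * c) = a * c - b * b)
      by (field; lra).
    assert (0 <= c * (a + 2 * (- b / c) * b + (- b / c) * (- b / c) * c))
      by (apply Rmult_le_pos; lra).
    lra.
Qed.

Lemma hnorm_triangle x y : hnorm (hadd H x y) <= hnorm x + hnorm y.
Proof.
  pose proof (hinner_cauchy_schwarz x y). pose proof (hinner_pos H x). pose proof (hinner_pos H y).
  pose proof (sqrt_pos (hinner H x x)). pose proof (sqrt_pos (hinner H y y)).
  unfold hnorm. rewrite <- (sqrt_square (sqrt (hinner H x x) + sqrt (hinner H y y))) by lra.
  apply sqrt_le_1_alt.
  replace (hinner H (hadd H x y) (hadd H x y))
    with (hinner H x x + 2 * hinner H x y + hinner H y y)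
    by (rewrite hinner_addl, !hinner_addr, (hinner_sym H y x); ring).
  assert (hinner H x y <= sqrt (hinner H x x) * sqrt (hinner H y y)).
  { rewrite <- sqrt_mult by auto.
    destruct (Rle_dec (hinner H x y) 0).
    - pose proof (sqrt_pos (hinner H x x * hinner H y y)). lra.
    - rewrite <- (sqrt_square (hinner H x y)) by lra. apply sqrt_le_1_alt. auto. }
  pose proof (sqrt_sqrt (hinner H x x)). pose proof (sqrt_sqrt (hinner H y y)). nra.
Qed.

Lemma hnorm_scal a x : hnorm (hscal H a x) = Rabs a * hnorm x.
Proof.
  unfold hnorm. rewrite hinner_scall, hinner_scalr, <- Rmult_assoc.
  rewrite sqrt_mult by (try apply hinner_pos; nra).
  rewrite <- sqrt_Rsqr_abs. reflexivity.
Qed.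

Lemma hnorm_opp x : hnorm (hopp H x) = hnorm x.
Proof. rewrite hopp_scal, hnorm_scal, Rabs_left by lra. ring. Qed.

Lemma hnorm_sub_triangle x y z : hnorm (hsub x z) <= hnorm (hsub x y) + hnorm (hsub y z).
Proof. replace (hsub x z) with (hadd H (hsub x y) (hsub y z)) by vector_eq. apply hnorm_triangle. Qed.

Lemma hnorm_sub_sym x y : hnorm (hsub x y) = hnorm (hsub y x).
Proof. replace (hsub x y) with (hopp H (hsub y x)) by vector_eq. apply hnorm_opp. Qed.

Lemma hnorm_sub_0l x : hnorm (hsub (hzero H) x) = hnorm x.
Proof. replace (hsub (hzero H) x) with (hopp H x) by vector_eq. apply hnorm_opp. Qed.

Lemma hnorm_sub_diag x : hnorm (hsub x x) = 0.
Proof. replace (hsub x x) with (hscal H 0 x) by vector_eq. rewrite hnorm_scal, Rabs_R0. ring. Qed.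

Lemma eq_of_hnorm_sub_small x y : (forall d, 0 < d -> hnorm (hsub x y) < d) -> x = y.
Proof.
  intro Small. assert (N0 : hnorm (hsub x y) = 0).
  { pose proof (hnorm_ge0 (hsub x y)).
    destruct (Req_dec (hnorm (hsub x y)) 0) as [|Ne]; auto.
    specialize (Small (hnorm (hsub x y))). lra. }
  apply sqrt_eq_0 in N0; [|apply hinner_pos]. apply hinner_def in N0.
  replace x with (hadd H (hsub x y) y) by vector_eq. rewrite N0. apply hadd_0l.
Qed.

End HilbertNorm.

Lemma hnorm_sub_sqr_parallelogram {H : CHilbert} (a b : H) :
  hinner H (hsub a b) (hsub a b) = 2 * hinner H a a + 2 * hinner H b b
     - 4 * hinner H (hscal H (1/2) (hadd H a b)) (hscal H (1/2) (hadd H a b)).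
Proof. hinner_expand. rewrite (hinner_sym H b a). field. Qed.

Definition displacement {H : CHilbert} (pi : Z -> H -> H) (x : H) (n : Z) : R :=
  hnorm (hsub (pi n x) x).

Section UnitaryRep.

Context {H : CHilbert} (pi : Z -> H -> H) (U : unitary_rep H pi).

Lemma rep_zero n : pi n (hzero H) = hzero H.
Proof.
  destruct U as (_ & _ & _ & Uscal & _).
  rewrite <- (hscal_0l (hzero H)) at 1. rewrite Uscal. apply hscal_0l.
Qed.

Lemma rep_sub n x y : pi n (hsub x y) = hsub (pi n x) (pi n y).
Proof.
  destruct U as (_ & _ & Uadd & Uscal & _).
  unfold hsub. rewrite Uadd, !hopp_scal, Uscal. reflexivity.
Qed.

Lemma rep_hnorm n x : hnorm (pi n x) = hnorm x.
Proof. destruct U as (_ & _ & _ & _ & _ & Uinner). unfold hnorm. rewrite Uinner. reflexivity. Qed.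

Lemma rep_fixed_of_fixed1 z : pi 1%Z z = z -> forall n, pi n z = z.
Proof.
  destruct U as (U0 & Umul & _). intro Fix1.
  assert (Fixnat : forall k : nat, pi (Z.of_nat k) z = z).
  { induction k as [|k IH]; [apply U0|].
    rewrite Nat2Z.inj_succ, <- Z.add_1_r, Umul, Fix1. exact IH. }
  intro n. destruct (Z_le_gt_dec 0 n).
  - rewrite <- (Z2Nat.id n) by lia. apply Fixnat.
  - rewrite <- (Fixnat (Z.to_nat (- n))) at 1. rewrite <- Umul.
    replace (n + Z.of_nat (Z.to_nat (- n)))%Z with 0%Z by lia. apply U0.
Qed.

Lemma displacement_0 x : displacement pi x 0 = 0.
Proof. destruct U as (U0 & _). unfold displacement. rewrite U0. apply hnorm_sub_diag. Qed.

Lemma displacement_add x a b :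
  displacement pi x (a + b) <= displacement pi x a + displacement pi x b.
Proof.
  pose proof U as (_ & Umul & _). unfold displacement. rewrite Umul.
  eapply Rle_trans; [apply (hnorm_sub_triangle _ (pi a x))|].
  rewrite <- rep_sub, rep_hnorm. lra.
Qed.

Lemma displacement_opp x b : displacement pi x (- b) = displacement pi x b.
Proof.
  pose proof U as (U0 & Umul & _). unfold displacement.
  transitivity (hnorm (hsub (pi (- b)%Z x) (pi (- b)%Z (pi b x)))).
  { rewrite <- Umul. replace (- b + b)%Z with 0%Z by lia. rewrite U0. reflexivity. }
  rewrite <- rep_sub, rep_hnorm. apply hnorm_sub_sym.
Qed.

End UnitaryRep.

Fixpoint orbit_comb {H : CHilbert} (pi : Z -> H -> H) (x : H) (l : list (R * Z)) : H :=
  match l with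
  | nil => hzero H
  | (w, n) :: l' => hadd H (hscal H w (pi n x)) (orbit_comb pi x l')
  end.

Fixpoint weight_sum (l : list (R * Z)) : R :=
  match l with nil => 0 | (w, _) :: l' => w + weight_sum l' end.

Definition nonneg_weights (l : list (R * Z)) : Prop := Forall (fun p => 0 <= fst p) l.

Definition convex_weights (l : list (R * Z)) : Prop := nonneg_weights l /\ weight_sum l = 1.

Definition shift_weights (m : Z) (l : list (R * Z)) : list (R * Z) :=
  map (fun p => (fst p, (m + snd p)%Z)) l.

Definition half_weights (l : list (R * Z)) : list (R * Z) := map (fun p => (fst p / 2, snd p)) l.

Lemma weight_sum_app l1 l2 : weight_sum (l1 ++ l2) = weight_sum l1 + weight_sum l2.
Proof. induction l1 as [|[w n] l IH]; simpl; [ring|]. rewrite IH; ring. Qed.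

Lemma weight_sum_half l : weight_sum (half_weights l) = weight_sum l / 2.
Proof. induction l as [|[w n] l IH]; simpl in *; [field|]. rewrite IH; field. Qed.

Lemma weight_sum_shift m l : weight_sum (shift_weights m l) = weight_sum l.
Proof. induction l as [|[w n] l IH]; simpl in *; congruence. Qed.

Lemma convex_shift m l : convex_weights l -> convex_weights (shift_weights m l).
Proof.
  intros [Nonneg Sum1]. split.
  - apply Forall_map. eapply Forall_impl; [|exact Nonneg]. auto.
  - rewrite weight_sum_shift. exact Sum1.
Qed.

Lemma convex_midpoint l1 l2 :
  convex_weights l1 -> convex_weights l2 -> convex_weights (half_weights (l1 ++ l2)).
Proof.
  intros [N1 S1] [N2 S2]. split.
  - apply Forall_map, Forall_app. split;
      (eapply Forall_impl; [|eassumption]); simpl; intros; lra.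
  - rewrite weight_sum_half, weight_sum_app. lra.
Qed.

Section OrbitCombination.

Context {H : CHilbert} (pi : Z -> H -> H) (x : H).

Lemma orbit_comb_app l1 l2 :
  orbit_comb pi x (l1 ++ l2) = hadd H (orbit_comb pi x l1) (orbit_comb pi x l2).
Proof. induction l1 as [|[w n] l IH]; simpl; [rewrite hadd_0l; auto|]. rewrite IH. vector_eq. Qed.

Lemma orbit_comb_half l : orbit_comb pi x (half_weights l) = hscal H (1/2) (orbit_comb pi x l).
Proof. induction l as [|[w n] l IH]; simpl in *; [|rewrite IH]; vector_eq. Qed.

Lemma rep_orbit_comb (U : unitary_rep H pi) m l :
  pi m (orbit_comb pi x l) = orbit_comb pi x (shift_weights m l).
Proof.
  induction l as [|[w n] l IH]; simpl; [apply rep_zero; auto|].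
  destruct U as (_ & Umul & Uadd & Uscal & _). rewrite Uadd, Uscal, IH, Umul. reflexivity.
Qed.

Lemma orbit_comb_dev R0 : (forall n, displacement pi x n <= R0) ->
  forall l, nonneg_weights l ->
  hnorm (hsub (orbit_comb pi x l) (hscal H (weight_sum l) x)) <= weight_sum l * R0.
Proof.
  intros Disp l Nonneg. induction Nonneg as [|[w n] l' W _ IH]; simpl in *.
  - replace (hsub (hzero H) (hscal H 0 x)) with (hscal H 0 x) by vector_eq.
    rewrite hnorm_scal, Rabs_R0. lra.
  - replace (hsub (hadd H (hscal H w (pi n x)) (orbit_comb pi x l')) (hscal H (w + weight_sum l') x))
      with (hadd H (hscal H w (hsub (pi n x) x)) (hsub (orbit_comb pi x l') (hscal H (weight_sum l') x)))
      by vector_eq.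
    eapply Rle_trans; [apply hnorm_triangle|].
    rewrite hnorm_scal, Rabs_pos_eq by auto.
    specialize (Disp n). unfold displacement in Disp. nra.
Qed.

Lemma convex_orbit_comb_dev R0 : (forall n, displacement pi x n <= R0) ->
  forall l, convex_weights l -> hnorm (hsub (orbit_comb pi x l) x) <= R0.
Proof.
  intros Disp l [Nonneg Sum1].
  pose proof (orbit_comb_dev R0 Disp l Nonneg) as Dev.
  rewrite Sum1, hscal_1, Rmult_1_l in Dev. exact Dev.
Qed.

End OrbitCombination.

Lemma ex_inf_nonneg {A : Type} (P : A -> Prop) (f : A -> R) :
  (exists a, P a) -> (forall a, P a -> 0 <= f a) ->
  exists d, (forall a, P a -> d <= f a) /\ forall e, 0 < e -> exists a, P a /\ f a < d + e.
Proof.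
  intros [a0 Pa0] Nonneg.
  set (E := fun r => exists a, P a /\ r = - f a).
  destruct (completeness E) as [m [Ub Lub]].
  { exists 0. intros r [a [Pa ->]]. specialize (Nonneg a Pa). lra. }
  { exists (- f a0), a0. auto. }
  exists (- m). split.
  - intros a Pa. assert (E (- f a)) as Ea by (exists a; auto). apply Ub in Ea. lra.
  - intros e He. apply NNPP. intro NoApprox.
    assert (m <= m - e); [|lra]. apply Lub. intros r [a [Pa ->]].
    destruct (Rlt_dec (f a) (- m + e)); [exfalso; eauto|lra].
Qed.

Definition cauchy_tol (k : nat) : R := sqrt (4 / (INR k + 1)).

Lemma cauchy_tol_antitone k j : (k <= j)%nat -> 2 / (INR j + 1) <= 2 / (INR k + 1).
Proof.
  intro Hkj. apply le_INR in Hkj. pose proof (pos_INR k).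
  apply Rmult_le_compat_l; [lra|]. apply Rinv_le_contravar; lra.
Qed.

Lemma cauchy_tol_eventually_lt e : 0 < e -> exists N : nat, forall k, (N <= k)%nat -> cauchy_tol k < e.
Proof.
  intro He. destruct (INR_archimed 1 (4 / (e * e))) as [N HN]; [lra|].
  exists N. intros k Hk. apply le_INR in Hk. pose proof (pos_INR k).
  assert (4 / (e * e) * (e * e) = 4) by (field; lra).
  assert (4 < e * e * (INR k + 1)) by nra.
  unfold cauchy_tol. rewrite <- (sqrt_square e) by lra. apply sqrt_lt_1_alt. split.
  - apply Rlt_le, Rdiv_lt_0_compat; lra.
  - apply (Rmult_lt_reg_r (INR k + 1)); [lra|].
    unfold Rdiv. rewrite Rmult_assoc, Rinv_l by lra. lra.
Qed.

(* [pi 1] preserves norms and convexity of weights, so it maps a minimizing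
   sequence to a minimizing one; by the parallelogram law the two sequences
   approach each other, hence their common limit is fixed by [pi 1]. *)
Section MinimalNormCombination.

Context {H : CHilbert} (pi : Z -> H -> H) (U : unitary_rep H pi) (x : H).

Let sqnorm (l : list (R * Z)) : R := hinner H (orbit_comb pi x l) (orbit_comb pi x l).

Variable d : R.
Hypothesis sqnorm_ge : forall l, convex_weights l -> d <= sqnorm l.
Hypothesis sqnorm_approx : forall e, 0 < e -> exists l, convex_weights l /\ sqnorm l < d + e.

Lemma almost_minimal_close l1 l2 e1 e2 :
  convex_weights l1 -> convex_weights l2 -> sqnorm l1 < d + e1 -> sqnorm l2 < d + e2 ->
  hnorm (hsub (orbit_comb pi x l1) (orbit_comb pi x l2)) <= sqrt (2 * e1 + 2 * e2).
Proof.
  intros C1 C2 S1 S2. apply sqrt_le_1_alt.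
  rewrite hnorm_sub_sqr_parallelogram.
  pose proof (sqnorm_ge _ (convex_midpoint _ _ C1 C2)) as Mid.
  unfold sqnorm in *. rewrite orbit_comb_half, orbit_comb_app in Mid. lra.
Qed.

Lemma ex_minimizing_sequence :
  exists lk : nat -> list (R * Z),
    forall k, convex_weights (lk k) /\ sqnorm (lk k) < d + 1 / (INR k + 1).
Proof.
  assert (Choice : forall k : nat, {l | convex_weights l /\ sqnorm l < d + 1 / (INR k + 1)}).
  { intro k. apply constructive_indefinite_description, sqnorm_approx.
    pose proof (pos_INR k). apply Rdiv_lt_0_compat; lra. }
  exists (fun k => proj1_sig (Choice k)). intro k. exact (proj2_sig (Choice k)).
Qed.

Lemma ex_invariant_limit :
  exists z, (forall n, pi n z = z) /\
    forall e, 0 < e -> exists l, convex_weights l /\ hnorm (hsub (orbit_comb pi x l) z) < e.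
Proof.
  destruct ex_minimizing_sequence as [lk Min].
  set (u k := orbit_comb pi x (lk k)).
  assert (Cauchy : forall k j, (k <= j)%nat -> hnorm (hsub (u k) (u j)) <= cauchy_tol k).
  { intros k j Hkj. destruct (Min k) as [Ck Sk]. destruct (Min j) as [Cj Sj].
    eapply Rle_trans; [apply (almost_minimal_close _ _ _ _ Ck Cj Sk Sj)|].
    apply sqrt_le_1_alt. pose proof (cauchy_tol_antitone k j Hkj). lra. }
  assert (Shift : forall k, hnorm (hsub (u k) (pi 1%Z (u k))) <= cauchy_tol k).
  { intro k. destruct (Min k) as [Ck Sk].
    assert (S1 : sqnorm (shift_weights 1 (lk k)) < d + 1 / (INR k + 1)).
    { unfold sqnorm. rewrite <- rep_orbit_comb by exact U.
      destruct U as (_ & _ & _ & _ & _ & Uinner). rewrite Uinner. exact Sk. }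
    unfold u. rewrite rep_orbit_comb by exact U.
    eapply Rle_trans; [apply (almost_minimal_close _ _ _ _ Ck (convex_shift 1 _ Ck) Sk S1)|].
    apply Req_le. unfold cauchy_tol. f_equal. pose proof (pos_INR k). field. lra. }
  destruct (hcomplete H u) as [z Lim].
  { intros e He. destruct (cauchy_tol_eventually_lt e He) as [N HN]. exists N. intros a b Ha Hb.
    change (hnorm (hsub (u a) (u b)) < e).
    destruct (Nat.le_ge_cases a b).
    - eapply Rle_lt_trans; [apply Cauchy|apply HN]; auto.
    - rewrite hnorm_sub_sym. eapply Rle_lt_trans; [apply Cauchy|apply HN]; auto. }
  change (forall e, 0 < e -> exists N, forall n, (N <= n)%nat -> hnorm (hsub (u n) z) < e) in Lim.
  exists z. split.
  - apply (rep_fixed_of_fixed1 pi U). symmetry. apply eq_of_hnorm_sub_small. intros e He.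
    destruct (Lim (e / 3)) as [N0 HN0]; [lra|].
    destruct (cauchy_tol_eventually_lt (e / 3)) as [N1 HN1]; [lra|].
    set (k := Nat.max N0 N1).
    assert (Close : hnorm (hsub (u k) z) < e / 3) by (apply HN0; lia).
    assert (hnorm (hsub (pi 1%Z (u k)) (pi 1%Z z)) = hnorm (hsub (u k) z))
      by (rewrite <- rep_sub, rep_hnorm by exact U; reflexivity).
    assert (cauchy_tol k < e / 3) by (apply HN1; lia).
    pose proof (Shift k).
    pose proof (hnorm_sub_triangle z (u k) (pi 1%Z z)).
    pose proof (hnorm_sub_triangle (u k) (pi 1%Z (u k)) (pi 1%Z z)).
    pose proof (hnorm_sub_sym z (u k)). lra.
  - intros e He. destruct (Lim e He) as [N HN]. exists (lk N). split; [apply Min|]. apply HN. lia.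
Qed.

End MinimalNormCombination.

Theorem invariant_vector_of_small_displacement {H : CHilbert} (pi : Z -> H -> H)
  (U : unitary_rep H pi) (x : H) (R0 : R) :
  (forall n, displacement pi x n <= R0) -> R0 < hnorm x ->
  exists v, v <> hzero H /\ forall n, pi n v = v.
Proof.
  intros Disp Small.
  destruct (ex_inf_nonneg convex_weights (fun l => hinner H (orbit_comb pi x l) (orbit_comb pi x l)))
    as [d [Low Approx]].
  { exists ((1, 0%Z) :: nil). split; [repeat constructor; simpl; lra | simpl; lra]. }
  { intros l _. apply hinner_pos. }
  destruct (ex_invariant_limit pi U x d Low Approx) as [z [Inv Near]].
  exists z. split; [|exact Inv]. intros ->.
  destruct (Near (hnorm x - R0)) as [l [Cl Cz]]; [lra|].
  pose proof (convex_orbit_comb_dev pi x R0 Disp l Cl).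
  pose proof (hnorm_sub_triangle (hzero H) (orbit_comb pi x l) x) as T.
  rewrite hnorm_sub_0l, (hnorm_sub_sym (hzero H)) in T. lra.
Qed.

Open Scope Z_scope.

Inductive signed_sum (Q : Z -> Prop) : nat -> Z -> Prop :=
| ss_nil : signed_sum Q 0 0
| ss_pad j n : signed_sum Q j n -> signed_sum Q (S j) n
| ss_addq j n q : signed_sum Q j n -> Q q -> signed_sum Q (S j) (n + q)
| ss_subq j n q : signed_sum Q j n -> Q q -> signed_sum Q (S j) (n - q).

Section SignedSum.

Variable Q : Z -> Prop.

Lemma signed_sum_single q : Q q -> signed_sum Q 1 q.
Proof. intro Qq. rewrite <- (Z.add_0_l q). apply ss_addq; [apply ss_nil|exact Qq]. Qed.

Lemma signed_sum_mono j k n : signed_sum Q j n -> (j <= k)%nat -> signed_sum Q k n.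
Proof. intros Sj Hk. induction Hk; [exact Sj|]. apply ss_pad. exact IHHk. Qed.

Lemma signed_sum_opp j n : signed_sum Q j n -> signed_sum Q j (- n).
Proof.
  induction 1.
  - apply ss_nil.
  - apply ss_pad. assumption.
  - rewrite Z.opp_add_distr. apply ss_subq; assumption.
  - replace (- (n - q)) with (- n + q) by ring. apply ss_addq; assumption.
Qed.

Lemma signed_sum_add j k a b :
  signed_sum Q j a -> signed_sum Q k b -> signed_sum Q (j + k) (a + b).
Proof.
  intros Sa Sb. induction Sb.
  - rewrite Nat.add_0_r, Z.add_0_r. exact Sa.
  - rewrite Nat.add_succ_r. apply ss_pad. assumption.
  - rewrite Nat.add_succ_r, Z.add_assoc. apply ss_addq; assumption.
  - rewrite Nat.add_succ_r, Z.add_sub_assoc. apply ss_subq; assumption.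
Qed.

Lemma signed_sum_sub j k a b :
  signed_sum Q j a -> signed_sum Q k b -> signed_sum Q (j + k) (a - b).
Proof. intros Sa Sb. apply signed_sum_add; [exact Sa|]. apply signed_sum_opp. exact Sb. Qed.

Lemma signed_sum_mul_nat j a m : signed_sum Q j a -> signed_sum Q (j * m) (a * Z.of_nat m).
Proof.
  intro Sa. induction m as [|m IH].
  - rewrite Nat.mul_0_r, Z.mul_0_r. apply ss_nil.
  - rewrite Nat.mul_succ_r, Nat.add_comm, Nat2Z.inj_succ, Z.mul_succ_r, Z.add_comm.
    apply signed_sum_add; assumption.
Qed.

Lemma signed_sum_mul j a t : signed_sum Q j a -> signed_sum Q (j * Z.abs_nat t) (a * t).
Proof.
  intro Sa. destruct (Z_le_gt_dec 0 t).
  - rewrite <- (Z2Nat.id t) at 2 by lia. rewrite Zabs2Nat.abs_nat_nonneg by lia.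
    apply signed_sum_mul_nat. exact Sa.
  - replace (a * t) with (- (a * Z.of_nat (Z.abs_nat t))) by lia.
    apply signed_sum_opp, signed_sum_mul_nat. exact Sa.
Qed.

Definition generated (n : Z) : Prop := exists j, signed_sum Q j n.

Lemma generated_sub a b : generated a -> generated b -> generated (a - b).
Proof. intros [j Sa] [k Sb]. exists (j + k)%nat. apply signed_sum_sub; assumption. Qed.

Lemma generated_mul a t : generated a -> generated (a * t).
Proof. intros [j Sa]. eexists. apply signed_sum_mul. exact Sa. Qed.

(* The least positive generated element divides all others: otherwise a
   remainder modulo it would be a smaller one. *)
Lemma ex_generated_divisor g : 0 < g -> generated g ->
  exists g', 0 < g' /\ generated g' /\ forall m, generated m -> (g' | m).
Proof.
  remember (Z.to_nat g) as n eqn:Hn. revert g Hn.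
  induction n as [n IH] using lt_wf_ind. intros g Hn Hpos Gg.
  destruct (classic (forall m, generated m -> (g | m))) as [Divides|NotAll]; [exists g; auto|].
  apply not_all_ex_not in NotAll. destruct NotAll as [m NotDiv].
  apply imply_to_and in NotDiv. destruct NotDiv as [Gm NotDiv].
  assert (Grem : generated (m mod g)).
  { rewrite Z.mod_eq by lia. apply generated_sub; [exact Gm|]. apply generated_mul. exact Gg. }
  assert (Bound : 0 <= m mod g < g) by (apply Z.mod_pos_bound; lia).
  assert (m mod g <> 0) by (intro E; apply NotDiv, Z.mod_divide; lia).
  apply (IH (Z.to_nat (m mod g))) with (g := m mod g); auto; lia.
Qed.

End SignedSum.

Definition diff (f : nat -> Z) (k : nat) : Z := f (S k) - f k.

Fixpoint diffn (n : nat) (f : nat -> Z) : nat -> Z :=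
  match n with O => f | S n => diffn n (diff f) end.

Lemma diffn_ext n : forall f g, (forall k, f k = g k) -> forall k, diffn n f k = diffn n g k.
Proof.
  induction n as [|n IH]; intros f g Efg k; simpl; [apply Efg|].
  apply IH. intro i. unfold diff. rewrite !Efg. reflexivity.
Qed.

Lemma diffn_add n : forall f g k, diffn n (fun i => f i + g i) k = diffn n f k + diffn n g k.
Proof.
  induction n as [|n IH]; intros f g k; simpl; [reflexivity|].
  rewrite <- IH. apply diffn_ext. intro i. unfold diff. ring.
Qed.

Lemma diffn_shift n : forall f k, diffn n (fun i => f (S i)) k = diffn n f (S k).
Proof. induction n as [|n IH]; intros f k; simpl; [reflexivity|]. exact (IH (diff f) k). Qed.

Lemma diffn_mul_index n : forall h, (forall k, diffn n h k = 0) ->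
  forall k, diffn (S n) (fun i => Z.of_nat i * h i) k = 0.
Proof.
  assert (Leibniz : forall h i, diff (fun i => Z.of_nat i * h i) i = h (S i) + Z.of_nat i * diff h i).
  { intros h i. unfold diff. rewrite Nat2Z.inj_succ. ring. }
  induction n as [|n IH]; intros h Hh k.
  - simpl in *. rewrite Leibniz. unfold diff. rewrite !Hh. ring.
  - change (diffn (S n) (diff (fun i => Z.of_nat i * h i)) k = 0).
    rewrite (diffn_ext (S n) _ _ (Leibniz h)), diffn_add, diffn_shift, Hh, IH by exact Hh.
    reflexivity.
Qed.

Definition zpoly_nat (c : list Z) (k : nat) : Z := zpoly_eval c (Z.of_nat k).

Lemma diffn_zpoly c k : diffn (length c) (zpoly_nat c) k = 0.
Proof.
  revert k. induction c as [|a c IH]; intro k; [reflexivity|].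
  change (diffn (length c) (diff (zpoly_nat (a :: c))) k = 0).
  rewrite (diffn_ext _ _ (diff (fun i => Z.of_nat i * zpoly_nat c i))).
  - apply diffn_mul_index. exact IH.
  - intro i. unfold diff, zpoly_nat. simpl. ring.
Qed.

Lemma diffn_signed_sum Q j n : forall f, (forall k, signed_sum Q j (f k)) ->
  forall k, signed_sum Q (2 ^ n * j) (diffn n f k).
Proof.
  revert j. induction n as [|n IH]; intros j f Sf k; simpl.
  - rewrite Nat.add_0_r. apply Sf.
  - replace ((2 ^ n + (2 ^ n + 0)) * j)%nat with (2 ^ n * (j + j))%nat by lia.
    apply IH. intro i. apply signed_sum_sub; apply Sf.
Qed.

Lemma diff_const_affine g A : (forall k, diff g k = A) -> forall k, g k = g 0%nat + A * Z.of_nat k.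
Proof.
  intros Dg k. induction k as [|k IH]; [simpl; ring|].
  specialize (Dg k). unfold diff in Dg. rewrite Nat2Z.inj_succ. lia.
Qed.

Lemma diffn_vanish_cases N : forall f, (forall k, diffn N f k = 0) ->
  (forall k, f k = f 0%nat) \/ exists s A, A <> 0 /\ forall k, diff (diffn s f) k = A.
Proof.
  induction N as [|N IH]; intros f Hf; [left; intro k; simpl in Hf; rewrite !Hf; reflexivity|].
  destruct (IH (diff f) Hf) as [Const | [s [A [HA HD]]]].
  - destruct (Z.eq_dec (diff f 0%nat) 0) as [Z0|Z0].
    + left. induction k as [|k IHk]; [reflexivity|].
      specialize (Const k). rewrite Z0 in Const. unfold diff in Const. lia.
    + right. exists 0%nat, (diff f 0%nat). auto.
  - right. exists (S s), A. auto.
Qed.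

Lemma zpoly_coeffs_eq0 c : (forall k : nat, (1 <= k)%nat -> zpoly_nat c k = 0) ->
  forall i, nth i c 0 = 0.
Proof.
  induction c as [|b c IH]; intros Hz i; [destruct i; reflexivity|].
  assert (Hb : b = 0).
  { apply NNPP. intro Hb.
    set (k := Z.to_nat (Z.abs b + 1)).
    specialize (Hz k ltac:(unfold k; lia)). unfold zpoly_nat in Hz. simpl in Hz.
    assert (Dk : (Z.of_nat k | b)) by (exists (- zpoly_eval c (Z.of_nat k)); lia).
    apply Z.divide_abs_r, Z.divide_pos_le in Dk; [|lia]. unfold k in Dk. lia. }
  subst b. destruct i as [|i]; [reflexivity|]. simpl. apply IH. intros k Hk.
  specialize (Hz k Hk). unfold zpoly_nat in *. simpl in Hz. nia.
Qed.

Lemma zpoly_nonconstant_values c : zpoly_nonconstant c -> exists k, zpoly_nat c k <> zpoly_nat c 0%nat.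
Proof.
  intros [i [Hi Hn]]. apply NNPP. intro NoWitness.
  assert (Const : forall k, zpoly_nat c k = zpoly_nat c 0%nat)
    by (intro k; apply NNPP; intro; apply NoWitness; eauto).
  destruct c as [|a c]; [destruct i; simpl in Hn; congruence|].
  destruct i as [|i]; [lia|]. simpl in Hn. apply Hn, zpoly_coeffs_eq0. intros k Hk.
  specialize (Const k). unfold zpoly_nat in *. simpl in Const. nia.
Qed.

Lemma zpoly_eval_shift_divide c g : forall k t, (g | zpoly_eval c (k + g * t) - zpoly_eval c k).
Proof.
  induction c as [|a c IH]; intros k t; simpl; [exists 0; ring|].
  replace (a + (k + g * t) * zpoly_eval c (k + g * t) - (a + k * zpoly_eval c k))
    with (k * (zpoly_eval c (k + g * t) - zpoly_eval c k) + g * (t * zpoly_eval c (k + g * t)))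
    by ring.
  apply Z.divide_add_r; [apply Z.divide_mul_r, IH|apply Z.divide_factor_l].
Qed.

Lemma zpoly_divide_all c g : 0 < g -> (forall k : nat, (g | zpoly_nat c k)) ->
  forall k : Z, (g | zpoly_eval c k).
Proof.
  intros Hg Dnat k.
  pose proof (zpoly_eval_shift_divide c g (k mod g) (k / g)) as Shift.
  rewrite Z.add_comm, <- Z.div_mod in Shift by lia.
  specialize (Dnat (Z.to_nat (k mod g))). unfold zpoly_nat in Dnat.
  rewrite Z2Nat.id in Dnat by (apply Z.mod_pos_bound; lia).
  replace (zpoly_eval c k)
    with ((zpoly_eval c k - zpoly_eval c (k mod g)) + zpoly_eval c (k mod g)) by ring.
  apply Z.divide_add_r; assumption.
Qed.

Definition zpoly_range (c : list Z) (n : Z) : Prop := exists k : nat, n = zpoly_eval c (Z.of_nat k).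

(* The [s]-th difference of [p] is an arithmetic progression of step [A], and
   each of its terms is a signed sum of [2 ^ s] values of [p]. *)
Lemma zpoly_range_uniform_multiples c : zpoly_nonconstant c ->
  exists A M, A <> 0 /\ forall m, signed_sum (zpoly_range c) M (A * m).
Proof.
  intro Nc.
  assert (Single : forall k, signed_sum (zpoly_range c) 1 (zpoly_nat c k))
    by (intro k; apply signed_sum_single; exists k; reflexivity).
  destruct (diffn_vanish_cases _ _ (diffn_zpoly c)) as [Const | [s [A [HA Step]]]].
  { exfalso. destruct (zpoly_nonconstant_values c Nc) as [k Hk]. apply Hk, Const. }
  exists A, (2 ^ s * 1 + 2 ^ s * 1)%nat. split; [exact HA|].
  assert (Nat : forall m : nat, signed_sum (zpoly_range c) (2 ^ s * 1 + 2 ^ s * 1) (A * Z.of_nat m)).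
  { intro m.
    replace (A * Z.of_nat m) with (diffn s (zpoly_nat c) m - diffn s (zpoly_nat c) 0%nat)
      by (rewrite (diff_const_affine _ _ Step m); ring).
    apply signed_sum_sub; apply diffn_signed_sum; exact Single. }
  intro m. destruct (Z_le_gt_dec 0 m).
  - rewrite <- (Z2Nat.id m) by lia. apply Nat.
  - replace (A * m) with (- (A * Z.of_nat (Z.to_nat (- m)))) by lia. apply signed_sum_opp, Nat.
Qed.

Lemma zpoly_range_generates_one c :
  ~ (exists a, 2 <= Z.abs a /\ forall k, (a | zpoly_eval c k)) ->
  forall g, 0 < g -> generated (zpoly_range c) g -> generated (zpoly_range c) 1.
Proof.
  intros NoDivisor g Hg Gg.
  destruct (ex_generated_divisor _ g Hg Gg) as [g' [Hg' [Gg' Divides]]].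
  assert (Dall : forall k, (g' | zpoly_eval c k)).
  { apply zpoly_divide_all; [exact Hg'|]. intro k.
    apply Divides. exists 1%nat. apply signed_sum_single. exists k. reflexivity. }
  replace 1 with g'; [exact Gg'|].
  destruct (Z_le_gt_dec 2 g'); [|lia]. exfalso. apply NoDivisor. exists g'. split; [lia|exact Dall].
Qed.

(* Division with remainder by [|A|]: the quotient part is a multiple of [A] and
   the remainder is a sum of fewer than [|A|] copies of [1]. *)
Lemma zpoly_bounded_generation c : zpoly_nonconstant c ->
  ~ (exists a, 2 <= Z.abs a /\ forall k, (a | zpoly_eval c k)) ->
  exists K, forall n, signed_sum (zpoly_range c) K n.
Proof.
  intros Nc NoDivisor.
  destruct (zpoly_range_uniform_multiples c Nc) as [A [M [HA Mult]]].
  assert (Gabs : generated (zpoly_range c) (Z.abs A))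
    by (exists M; rewrite <- Z.sgn_abs; apply Mult).
  destruct (zpoly_range_generates_one c NoDivisor (Z.abs A) ltac:(lia) Gabs) as [L One].
  exists (M + L * Z.abs_nat A)%nat. intro n.
  rewrite (Z.div_mod n (Z.abs A)) by lia. apply signed_sum_add.
  - rewrite <- Z.sgn_abs, <- Z.mul_assoc. apply Mult.
  - apply signed_sum_mono with (L * Z.abs_nat (n mod Z.abs A))%nat.
    + rewrite <- (Z.mul_1_l (n mod Z.abs A)) at 2. apply signed_sum_mul. exact One.
    + apply Nat.mul_le_mono_l. pose proof (Z.mod_pos_bound n (Z.abs A)). lia.
Qed.

Close Scope Z_scope.

Lemma displacement_signed_sum {H : CHilbert} (pi : Z -> H -> H) (U : unitary_rep H pi)
  (x : H) (Q : Z -> Prop) (c : R) :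
  0 <= c -> (forall q, Q q -> displacement pi x q <= c) ->
  forall j n, signed_sum Q j n -> displacement pi x n <= INR j * c.
Proof.
  intros Hc Disp j n Sum. induction Sum as [| j n _ IH | j n q _ IH Qq | j n q _ IH Qq].
  - rewrite displacement_0 by exact U. simpl. lra.
  - rewrite S_INR. lra.
  - rewrite S_INR. eapply Rle_trans; [apply displacement_add; exact U|].
    specialize (Disp q Qq). lra.
  - rewrite S_INR. unfold Z.sub. eapply Rle_trans; [apply displacement_add; exact U|].
    rewrite displacement_opp by exact U. specialize (Disp q Qq). lra.
Qed.

Theorem mainTheorem11 (c : list Z) :
  zpoly_nonconstant c ->
  ~ (exists a : Z, (2 <= Z.abs a)%Z /\ forall k : Z, (a | zpoly_eval c k)%Z) ->
  Kazhdan_set (fun n : Z => exists k : nat, n = zpoly_eval c (Z.of_nat k)).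
Proof.
  intros Nc NoDivisor. destruct (zpoly_bounded_generation c Nc NoDivisor) as [K Gen].
  pose proof (pos_INR K) as K_ge0.
  exists (1 / (INR K + 1)). split; [apply Rdiv_lt_0_compat; lra|].
  intros H pi U [x [c0 [Small Disp]]].
  assert (0 <= c0).
  { apply (Rle_trans _ (displacement pi x (zpoly_eval c 0))); [apply hnorm_ge0|].
    apply Disp. exists 0%nat. reflexivity. }
  apply (invariant_vector_of_small_displacement pi U x (INR K * c0)).
  - intro n. apply (displacement_signed_sum pi U x (zpoly_range c) c0); auto.
  - pose proof (hnorm_ge0 x).
    replace (hnorm x) with (1 / (INR K + 1) * hnorm x * (INR K + 1)) by (field; lra).
    nra.
Qed.
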